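(* Let $K>1$ and let $r>0$ satisfy $r=\dfrac{I_1(2Kr)}{I_0(2Kr)}$. Then $$r<\sqrt[4]{1-\frac{1}{K}}.$$
   Context: $I_\nu$ denotes the modified Bessel function of the first kind of order $\nu$. The equation $r=I_1(2Kr)/I_0(2Kr)$ is the self-consistency equation for the asymptotic order parameter $r$ of the stochastic Kuramoto model with coupling $K$. *)

From Stdlib Require Import Reals Factorial.
From Coquelicot Require Import Coquelicot.
Open Scope R_scope.

(* Modified Bessel function of the first kind of integer order n:
   I_n(x) = sum_{k>=0} (x/2)^(2k+n) / (k! (k+n)!).
   The series converges absolutely for every real x. *)
Definition bessel_I (n : nat) (x : R) : R :=
  Series (fun k : nat => (x / 2) ^ (2 * k + n) / (INR (fact k) * INR (fact (k + n)))).

Definition bessel_I0 (x : R) : R := bessel_I 0 x.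
Definition bessel_I1 (x : R) : R := bessel_I 1 x.

From Stdlib Require Import Reals Factorial Lra Lia Psatz Classical.
From Coquelicot Require Import Coquelicot.
Open Scope R_scope.

(* Write [I_n(x) = (x/2)^n g_n((x/2)^2)] with [g_n(y) = sum_k y^k / (k! (k+n)!)].  With
   [t = K r] the fixed-point equation says [r = t g_1 / g_0] and [1 / K = g_1 / g_0] at
   [y = t^2], so [r^4 < 1 - 1/K] amounts to the positivity of
   [G(y) = g_0^3 (g_0 - g_1) - y^2 g_1^4].  Since [g_0' = g_1], [g_1' = g_2] and
   [g_0 = g_1 + y g_2], [G] is positive for small [y > 0], and at every positive root
   of [G] its derivative is positive; hence [G] never vanishes on [(0, oo)]. *)

Definition bessel_coef (n k : nat) : R := / (INR (fact k) * INR (fact (k + n))).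

Definition bessel_red (n : nat) : R -> R := PSeries (bessel_coef n).

Lemma INR_fact_pos k : 0 < INR (fact k).
Proof. apply lt_0_INR, lt_O_fact. Qed.

Lemma INR_fact_S k : INR (fact (S k)) = INR (S k) * INR (fact k).
Proof. rewrite fact_simpl, mult_INR. reflexivity. Qed.

Lemma bessel_coef_pos n k : 0 < bessel_coef n k.
Proof.
  apply Rinv_0_lt_compat, Rmult_lt_0_compat; apply INR_fact_pos.
Qed.

Lemma bessel_coef_0 n : bessel_coef n 0 = / INR (fact n).
Proof. unfold bessel_coef; simpl; rewrite Rmult_1_l; reflexivity. Qed.

Lemma bessel_coef_S n k :
  bessel_coef n (S k) = bessel_coef n k / (INR (S k) * INR (S (k + n))).
Proof.
  unfold bessel_coef. rewrite Nat.add_succ_l, !INR_fact_S.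
  pose proof (INR_fact_pos k); pose proof (INR_fact_pos (k + n)).
  pose proof (lt_0_INR (S k) ltac:(lia)); pose proof (lt_0_INR (S (k + n)) ltac:(lia)).
  field; lra.
Qed.

Lemma bessel_coef_Sn n k : bessel_coef (S n) k = bessel_coef n k / INR (S (k + n)).
Proof.
  unfold bessel_coef. rewrite Nat.add_succ_r, INR_fact_S.
  pose proof (INR_fact_pos k); pose proof (INR_fact_pos (k + n)).
  pose proof (lt_0_INR (S (k + n)) ltac:(lia)).
  field; lra.
Qed.

Lemma CV_radius_infinite_of_ratio_le (a : nat -> R) :
  (forall n, 0 < a n) -> (forall n, a (S n) <= a n / INR (S n)) ->
  CV_radius a = p_infty.
Proof.
  intros Hpos Hratio. apply CV_radius_infinite_DAlembert.
  - intros n. specialize (Hpos n). lra.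
  - apply is_lim_seq_le_le with (u := fun _ => 0) (w := fun n => / INR (S n)).
    + intros n. pose proof (Hpos n); pose proof (Hpos (S n)).
      rewrite Rabs_pos_eq by (apply Rlt_le, Rdiv_lt_0_compat; lra).
      split; [apply Rlt_le, Rdiv_lt_0_compat; lra |].
      pose proof (lt_0_INR (S n) ltac:(lia)).
      apply Rle_trans with ((a n / INR (S n)) / a n); [| right; field; lra].
      apply Rmult_le_compat_r; [apply Rlt_le, Rinv_0_lt_compat; lra | apply Hratio].
    + apply is_lim_seq_const.
    + apply (is_lim_seq_incr_1 (fun n => / INR n)).
      replace (Finite 0) with (Rbar_inv p_infty) by reflexivity.
      apply is_lim_seq_inv; [apply is_lim_seq_INR | discriminate].
Qed.

Lemma CV_radius_bessel_coef n : CV_radius (bessel_coef n) = p_infty.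
Proof.
  apply CV_radius_infinite_of_ratio_le; [apply bessel_coef_pos |].
  intros k. rewrite bessel_coef_S.
  pose proof (bessel_coef_pos n k).
  pose proof (lt_0_INR (S k) ltac:(lia)); pose proof (le_INR 1 (S (k + n)) ltac:(lia)).
  unfold Rdiv. apply Rmult_le_compat_l; [lra |].
  rewrite Rinv_mult. rewrite <- (Rmult_1_r (/ INR (S k))) at 2.
  apply Rmult_le_compat_l; [apply Rlt_le, Rinv_0_lt_compat; lra |].
  rewrite <- Rinv_1. apply Rinv_le_contravar; simpl in *; lra.
Qed.

Lemma ex_pseries_bessel_coef n y : ex_pseries (bessel_coef n) y.
Proof. apply CV_radius_inside. rewrite CV_radius_bessel_coef. exact I. Qed.

Lemma bessel_I_red n x : bessel_I n x = (x / 2) ^ n * bessel_red n ((x / 2) ^ 2).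
Proof.
  unfold bessel_I, bessel_red, PSeries. rewrite <- Series_scal_l.
  apply Series_ext. intros k. rewrite pow_add, <- pow_mult. unfold bessel_coef, Rdiv. ring.
Qed.

Lemma PS_derive_bessel_coef n k : PS_derive (bessel_coef n) k = bessel_coef (S n) k.
Proof.
  unfold PS_derive. rewrite bessel_coef_S, bessel_coef_Sn.
  pose proof (lt_0_INR (S k) ltac:(lia)); pose proof (lt_0_INR (S (k + n)) ltac:(lia)).
  field; lra.
Qed.

Lemma is_derive_bessel_red n y : is_derive (bessel_red n) y (bessel_red (S n) y).
Proof.
  unfold bessel_red. rewrite <- (PSeries_ext _ _ y (PS_derive_bessel_coef n)).
  apply is_derive_PSeries. rewrite CV_radius_bessel_coef. exact I.
Qed.

Lemma Derive_bessel_red n y : Derive (bessel_red n) y = bessel_red (S n) y.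
Proof. apply is_derive_unique, is_derive_bessel_red. Qed.

Lemma bessel_red_rec n y :
  bessel_red n y = INR (S n) * bessel_red (S n) y + y * bessel_red (S (S n)) y.
Proof.
  unfold bessel_red. rewrite <- PSeries_scal, <- PSeries_incr_1, <- PSeries_plus.
  2: apply ex_pseries_scal; [apply Rmult_comm | apply ex_pseries_bessel_coef].
  2: apply ex_pseries_incr_1, ex_pseries_bessel_coef.
  apply PSeries_ext. intros [|k]; unfold PS_plus, PS_scal, PS_incr_1;
    change (plus ?a ?b) with (a + b); change (scal ?a ?b) with (a * b).
  - change zero with 0. rewrite !bessel_coef_Sn. simpl (0 + n)%nat.
    pose proof (lt_0_INR (S n) ltac:(lia)). field. lra.
  - rewrite !bessel_coef_Sn, !bessel_coef_S, Nat.add_succ_l, Nat.add_succ_r.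
    rewrite !S_INR, !plus_INR. pose proof (pos_INR k); pose proof (pos_INR n).
    field. lra.
Qed.

Lemma bessel_red_ge n y : 0 <= y -> / INR (fact n) <= bessel_red n y.
Proof.
  intros Hy. rewrite <- bessel_coef_0. unfold bessel_red, PSeries.
  assert (Hex : ex_series (fun k => bessel_coef n k * y ^ k))
    by apply ex_pseries_R, ex_pseries_bessel_coef.
  rewrite Series_incr_1 by exact Hex. simpl. rewrite Rmult_1_r.
  cut (0 <= Series (fun k => bessel_coef n (S k) * (y * y ^ k))); [lra |].
  replace 0 with (Series (fun _ => 0 * 0)) by (rewrite Series_scal_l; ring).
  apply Series_le.
  - intros k. split; [lra |]. rewrite Rmult_0_l.
    apply Rmult_le_pos; [apply Rlt_le, bessel_coef_pos | apply (pow_le y (S k) Hy)].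
  - apply (ex_series_incr_1 (fun k => bessel_coef n k * y ^ k)). exact Hex.
Qed.

Lemma continuity_pt_sign_near (f : R -> R) x : continuity_pt f x -> f x <> 0 ->
  exists d, 0 < d /\ forall z, Rabs (z - x) < d -> 0 < f z * f x.
Proof.
  intros Hc Hfx.
  assert (Habs : 0 < Rabs (f x)) by (apply Rabs_pos_lt; exact Hfx).
  destruct (Hc (Rabs (f x)) Habs) as [d [Hd Hnear]].
  exists d; split; [exact Hd |]. intros z Hz.
  assert (Hdist : Rabs (f z - f x) < Rabs (f x)).
  { destruct (Req_dec z x) as [-> | Hne].
    - rewrite Rminus_diag, Rabs_R0. exact Habs.
    - apply (Hnear z). repeat split; [auto | exact Hz]. }
  apply Rabs_lt_between in Hdist.
  destruct (Rle_or_lt 0 (f x)).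
  - rewrite Rabs_pos_eq in Hdist by lra. nra.
  - rewrite Rabs_left in Hdist by lra. nra.
Qed.

Lemma neg_left_of_upward_root (f : R -> R) x l :
  derivable_pt_lim f x l -> 0 < l -> f x = 0 ->
  exists d, 0 < d /\ forall z, x - d < z < x -> f z < 0.
Proof.
  intros Hd Hl Hfx.
  destruct (Hd (l / 2) ltac:(lra)) as [[d Hdpos] Hq].
  exists d; split; [exact Hdpos |]. intros z Hz.
  specialize (Hq (z - x) ltac:(lra) ltac:(rewrite Rabs_left; simpl; lra)).
  replace (x + (z - x)) with z in Hq by ring. rewrite Hfx, Rminus_0_r in Hq.
  apply Rabs_lt_between in Hq.
  replace (f z) with (f z / (z - x) * (z - x)) by (field; lra).
  apply Rmult_pos_neg; lra.
Qed.

(* At the supremum [m] of the initial interval of positivity, [f m > 0] would extend the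
   interval, while [f m < 0] or an upward root at [m] would make [f] negative just left of [m]. *)
Lemma pos_of_upward_roots (f df : R -> R) a b : a <= b -> 0 < f a ->
  (forall x, a <= x <= b -> derivable_pt_lim f x (df x)) ->
  (forall x, a <= x <= b -> f x = 0 -> 0 < df x) ->
  0 < f b.
Proof.
  intros Hab Hfa Hder Hroot.
  set (T := fun z => z <= b /\ forall w, a <= w <= z -> 0 < f w).
  assert (HTa : T a) by (split; [exact Hab | intros w Hw; replace w with a by lra; exact Hfa]).
  destruct (completeness T) as [m [Hub Hlub]].
  { exists b. intros z [Hz _]. exact Hz. }
  { exists a. exact HTa. }
  assert (Ham : a <= m) by (apply Hub, HTa).
  assert (Hmb : m <= b) by (apply Hlub; intros z [Hz _]; exact Hz).
  assert (Hleft : forall w, a <= w < m -> 0 < f w).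
  { intros w Hw. destruct (classic (exists z, T z /\ w < z)) as [[z [[_ Hz] Hwz]] | Hnone].
    - apply Hz. lra.
    - exfalso. assert (m <= w); [| lra]. apply Hlub. intros z HTz.
      destruct (Rle_or_lt z w) as [| Hwz]; [assumption |].
      exfalso. apply Hnone. exists z. split; assumption. }
  assert (Hcont : continuity_pt f m)
    by (apply derivable_continuous_pt; exists (df m); apply Hder; lra).
  destruct (Rtotal_order 0 (f m)) as [Hpos | Hnonpos].
  - destruct (Rle_lt_or_eq_dec m b Hmb) as [Hlt | <-]; [exfalso | exact Hpos].
    destruct (continuity_pt_sign_near f m Hcont ltac:(lra)) as [d [Hd Hnear]].
    set (z := Rmin b (m + d / 2)).
    assert (Hz : m < z) by (apply Rmin_glb_lt; lra).
    assert (Hzd : z <= m + d / 2) by apply Rmin_r.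
    assert (HTz : T z).
    { split; [apply Rmin_l |]. intros w Hw.
      destruct (Rlt_or_le w m); [apply Hleft; lra |].
      specialize (Hnear w ltac:(rewrite Rabs_pos_eq; lra)). nra. }
    specialize (Hub z HTz). lra.
  - exfalso.
    assert (Ham' : a < m) by (destruct (Req_dec a m) as [<- |]; lra).
    assert (Hneg : exists d, 0 < d /\ forall z, m - d < z < m -> f z < 0).
    { destruct Hnonpos as [Hzero | Hneg].
      - apply (neg_left_of_upward_root f m (df m)); [apply Hder; lra | apply Hroot; lra | lra].
      - destruct (continuity_pt_sign_near f m Hcont ltac:(lra)) as [d [Hd Hnear]].
        exists d. split; [exact Hd |]. intros z Hz.
        specialize (Hnear z ltac:(rewrite Rabs_left; lra)). nra. }
    destruct Hneg as [d [Hd Hneg]].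
    set (w := Rmax a (m - d / 2)).
    assert (Hw : a <= w < m) by (split; [apply Rmax_l | apply Rmax_lub_lt; lra]).
    assert (Hwd : m - d / 2 <= w) by apply Rmax_r.
    specialize (Hneg w ltac:(lra)).
    specialize (Hleft w Hw). lra.
Qed.

Definition bessel_gap (y : R) : R :=
  bessel_red 0 y ^ 3 * (bessel_red 0 y - bessel_red 1 y) - y ^ 2 * bessel_red 1 y ^ 4.

Definition bessel_gap' (y : R) : R :=
  3 * bessel_red 0 y ^ 2 * bessel_red 1 y * (bessel_red 0 y - bessel_red 1 y)
  + bessel_red 0 y ^ 3 * (bessel_red 1 y - bessel_red 2 y)
  - (2 * y * bessel_red 1 y ^ 4 + 4 * y ^ 2 * bessel_red 1 y ^ 3 * bessel_red 2 y).

Lemma derivable_pt_lim_bessel_gap y : derivable_pt_lim bessel_gap y (bessel_gap' y).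
Proof.
  apply is_derive_Reals. unfold bessel_gap. auto_derive.
  - repeat split; eexists; apply is_derive_bessel_red.
  - rewrite !Derive_bessel_red. unfold bessel_gap'. ring.
Qed.

(* With [u = p / q] and [z = y u^2] the root condition reads [z^2 = 1 - u],
   and then [y p D = q^5 z (1 - z)^3] for the expression [D] of the conclusion. *)
Lemma root_deriv_pos_algebra p q s y : 0 < p -> 0 < q -> 0 < y ->
  q = p + y * s -> q ^ 3 * (q - p) = y ^ 2 * p ^ 4 ->
  0 < 3 * q ^ 2 * p * (q - p) + q ^ 3 * (p - s) - (2 * y * p ^ 4 + 4 * y ^ 2 * p ^ 3 * s).
Proof.
  intros Hp Hq Hy Hrec Hroot.
  set (D := 3 * q ^ 2 * p * (q - p) + q ^ 3 * (p - s) - (2 * y * p ^ 4 + 4 * y ^ 2 * p ^ 3 * s)).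
  set (u := p / q). set (z := y * u ^ 2).
  assert (Hu : 0 < u) by (apply Rdiv_lt_0_compat; lra).
  assert (Hz : 0 < z) by (apply Rmult_lt_0_compat; [lra | apply pow_lt; lra]).
  assert (Hzu : z ^ 2 = 1 - u).
  { unfold z, u. replace ((y * (p / q) ^ 2) ^ 2) with (y ^ 2 * p ^ 4 / q ^ 4) by (field; lra).
    rewrite <- Hroot. field. lra. }
  assert (Hz1 : z < 1) by nra.
  assert (HD : y * D * p = q ^ 5 * (3 * z * (1 - u) + z - u * (1 - u) - 2 * z ^ 2 * u
                                    - 4 * z ^ 2 * (1 - u))).
  { unfold D, z, u. replace s with ((q - p) / y) by (rewrite Hrec; field; lra).
    field. lra. }
  replace (3 * z * (1 - u) + z - u * (1 - u) - 2 * z ^ 2 * u - 4 * z ^ 2 * (1 - u))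
    with (z * (1 - z) ^ 3) in HD by (replace u with (1 - z ^ 2) by lra; ring).
  assert (0 < q ^ 5 * (z * (1 - z) ^ 3))
    by (apply Rmult_lt_0_compat; [apply pow_lt | apply Rmult_lt_0_compat; [| apply pow_lt]]; lra).
  destruct (Rlt_or_le 0 D) as [| HD0]; [assumption |].
  assert (y * D <= 0) by nra. assert (y * D * p <= 0) by nra. lra.
Qed.

Lemma bessel_red_012_ge y : 0 <= y ->
  1 <= bessel_red 0 y /\ 1 <= bessel_red 1 y /\ / 2 <= bessel_red 2 y.
Proof.
  intros Hy. pose proof (bessel_red_ge 0 y Hy); pose proof (bessel_red_ge 1 y Hy);
    pose proof (bessel_red_ge 2 y Hy). simpl in *. lra.
Qed.

Lemma bessel_gap'_pos_at_root y : 0 < y -> bessel_gap y = 0 -> 0 < bessel_gap' y.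
Proof.
  intros Hy Hroot. destruct (bessel_red_012_ge y ltac:(lra)) as [Ha [Hb _]].
  apply root_deriv_pos_algebra; try lra.
  - rewrite (bessel_red_rec 0 y). simpl. ring.
  - unfold bessel_gap in Hroot. lra.
Qed.

Lemma bessel_gap_pos_near_0 : exists d, 0 < d /\ forall y, 0 < y <= d -> 0 < bessel_gap y.
Proof.
  assert (Hcont : continuity_pt (fun y => 2 - bessel_red 1 y) 0).
  { apply continuity_pt_minus; [apply continuity_pt_const; intros ? ? ; reflexivity |].
    apply derivable_continuous_pt. exists (bessel_red 2 0).
    apply is_derive_Reals, is_derive_bessel_red. }
  assert (Hat0 : 2 - bessel_red 1 0 = 1).
  { unfold bessel_red. rewrite PSeries_0, bessel_coef_0. simpl. field. }
  destruct (continuity_pt_sign_near _ 0 Hcont ltac:(lra)) as [d [Hd Hnear]].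
  exists (Rmin (d / 2) (1 / 64)). split; [apply Rmin_pos; lra |].
  intros y [Hy Hyd].
  pose proof (Rmin_l (d / 2) (1 / 64)); pose proof (Rmin_r (d / 2) (1 / 64)).
  specialize (Hnear y ltac:(rewrite Rminus_0_r, Rabs_pos_eq; lra)).
  rewrite Hat0, Rmult_1_r in Hnear.
  destruct (bessel_red_012_ge y ltac:(lra)) as [Ha [Hb Hc]].
  assert (Hdiff : bessel_red 0 y - bessel_red 1 y = y * bessel_red 2 y)
    by (rewrite (bessel_red_rec 0 y); simpl; ring).
  unfold bessel_gap. rewrite Hdiff.
  set (a := bessel_red 0 y) in *. set (b := bessel_red 1 y) in *. set (c := bessel_red 2 y) in *.
  assert (1 <= a ^ 3) by (rewrite <- (pow1 3); apply pow_incr; lra).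
  assert (b ^ 4 <= 16) by (replace 16 with (2 ^ 4) by ring; apply pow_incr; lra).
  replace (a ^ 3 * (y * c) - y ^ 2 * b ^ 4) with (y * (a ^ 3 * c - y * b ^ 4)) by ring.
  apply Rmult_lt_0_compat; nra.
Qed.

Lemma bessel_gap_pos y : 0 < y -> 0 < bessel_gap y.
Proof.
  intros Hy. destruct bessel_gap_pos_near_0 as [d [Hd Hnear]].
  destruct (Rle_or_lt y d); [apply Hnear; lra |].
  apply (pos_of_upward_roots bessel_gap bessel_gap' d y); [lra | apply Hnear; lra | |].
  - intros x _. apply derivable_pt_lim_bessel_gap.
  - intros x Hx. apply bessel_gap'_pos_at_root. lra.
Qed.

Lemma lt_Rpower_inv_of_pow_lt x c n : 0 < x -> (0 < n)%nat -> x ^ n < c -> x < Rpower c (/ INR n).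
Proof.
  intros Hx Hn Hxc.
  assert (HnR : 0 < INR n) by (apply lt_0_INR; exact Hn).
  replace x with (Rpower (x ^ n) (/ INR n)) at 1.
  - apply Rlt_Rpower_l; [apply Rinv_0_lt_compat; exact HnR | split; [apply pow_lt |]; assumption].
  - rewrite <- Rpower_pow, Rpower_mult, Rinv_r, Rpower_1; lra.
Qed.

Theorem mainTheorem1 (K r : R) (hK : 1 < K) (hr : 0 < r)
  (hfix : r = bessel_I1 (2 * K * r) / bessel_I0 (2 * K * r)) :
  r < Rpower (1 - 1 / K) (1 / 4).
Proof.
  unfold bessel_I0, bessel_I1 in hfix. rewrite !bessel_I_red in hfix.
  set (t := K * r) in *. replace (2 * K * r / 2) with t in hfix by (unfold t; field).
  assert (Ht : 0 < t) by (unfold t; nra).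
  destruct (bessel_red_012_ge (t ^ 2) ltac:(apply pow_le; lra)) as [Ha [Hb _]].
  pose proof (bessel_gap_pos (t ^ 2) ltac:(apply pow_lt; lra)) as Hgap.
  unfold bessel_gap in Hgap.
  set (a := bessel_red 0 (t ^ 2)) in *. set (b := bessel_red 1 (t ^ 2)) in *.
  assert (Hr : r = t * b / a) by (rewrite hfix at 1; field; lra).
  assert (HK : 1 / K = b / a).
  { replace K with (t / r) by (unfold t; field; lra). rewrite Hr. field. lra. }
  assert (Hr4 : r ^ 4 < 1 - 1 / K).
  { rewrite HK, Hr.
    enough (0 < 1 - b / a - (t * b / a) ^ 4) by lra.
    replace (1 - b / a - (t * b / a) ^ 4)
      with ((a ^ 3 * (a - b) - (t ^ 2) ^ 2 * b ^ 4) / a ^ 4) by (field; lra).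
    apply Rdiv_lt_0_compat; [exact Hgap | apply pow_lt; lra]. }
  replace (1 / 4) with (/ INR 4) by (simpl; field).
  apply lt_Rpower_inv_of_pow_lt; [lra | lia | exact Hr4].
Qed.
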